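(* Let $(V,E)$ be a graph with $k$ cliques and $\ell$ cocliques. Then there is a UFA with $|V|$ states whose forward determinization has at least $k$ states and whose backward determinization has at least $\ell$ states.
   Context: A graph is a finite simple undirected graph $(V,E)$. A clique is a set $X\subseteq V$ with every two distinct vertices adjacent; a coclique is a set $Y\subseteq V$ with no two distinct vertices adjacent (the empty set counts as both). A UFA is an NFA $(Q,\Sigma,\delta,I,F)$ (finite states, finite alphabet, transitions $\delta\subseteq Q\times\Sigma\times Q$, initial states $I$, accepting states $F$) in which every word has at most one accepting run. For $S\subseteq Q$, $w\in\Sigma^*$: $\delta(S,w)=\{r\mid\exists q\in S.\ q\xrightarrow{w}r\}$, $\delta^{-1}(w,S)=\{r\mid \exists q\in S.\ r\xrightarrow{w} q\}$. The forward determinization has state set $\{\delta(I,w)\mid w\in\Sigma^*\}$; the backward determinization has state set $\{\delta^{-1}(w,F)\mid w\in\Sigma^*\}$. *)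

From mathcomp Require Import all_boot.
From mathcomp Require Import boolp.
Set Implicit Arguments. Unset Strict Implicit. Unset Printing Implicit Defensive.

Definition simple_graph (T : finType) (e : rel T) : Prop :=
  symmetric e /\ irreflexive e.

Definition is_clique (T : finType) (e : rel T) (X : {set T}) : bool :=
  [forall x in X, forall y in X, (x != y) ==> e x y].

Definition is_coclique (T : finType) (e : rel T) (Y : {set T}) : bool :=
  [forall x in Y, forall y in Y, (x != y) ==> ~~ e x y].

Definition cliques (T : finType) (e : rel T) : {set {set T}} :=
  [set X | is_clique e X].
Definition cocliques (T : finType) (e : rel T) : {set {set T}} :=
  [set Y | is_coclique e Y].

Record nfa (Q Sigma : finType) := Nfa {
  trans : Q -> Sigma -> Q -> bool;
  init  : {set Q};
  final : {set Q} }.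

Section NFA.
Variables (Q Sigma : finType) (A : nfa Q Sigma).

(* q0 :: r is a run on w starting at q0 *)
Fixpoint run_from (q : Q) (w : seq Sigma) (r : seq Q) : bool :=
  match w, r with
  | [::], [::] => true
  | a :: w', q' :: r' => trans A q a q' && run_from q' w' r'
  | _, _ => false
  end.

Definition accepting_run (w : seq Sigma) (q0 : Q) (r : seq Q) : bool :=
  [&& q0 \in init A, run_from q0 w r & last q0 r \in final A].

Definition unambiguous : Prop :=
  forall w q0 r q0' r', accepting_run w q0 r -> accepting_run w q0' r' ->
    q0 :: r = q0' :: r'.

Fixpoint path_to (q : Q) (w : seq Sigma) (p : Q) : bool :=
  match w with
  | [::] => q == p
  | a :: w' => [exists q', trans A q a q' && path_to q' w' p]
  end.

Definition delta (S : {set Q}) (w : seq Sigma) : {set Q} :=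
  [set p | [exists q in S, path_to q w p]].
Definition delta_inv (w : seq Sigma) (S : {set Q}) : {set Q} :=
  [set p | [exists q in S, path_to p w q]].

Definition fwd_det_states : {set {set Q}} :=
  [set S | `[< exists w : seq Sigma, S = delta (init A) w >]].
Definition bwd_det_states : {set {set Q}} :=
  [set S | `[< exists w : seq Sigma, S = delta_inv w (final A) >]].
End NFA.

From mathcomp Require Import all_boot.
From mathcomp Require Import boolp.
Set Implicit Arguments. Unset Strict Implicit. Unset Printing Implicit Defensive.

(* Fix a vertex v0 of the graph (V,E).  The automaton has the
   vertices as states, v0 as its only initial and only accepting state, and
   one letter per set of vertices in each of two colours:
   - the clique letter (true, X) moves v0 to every p in X, provided X is a
     clique;
   - the coclique letter (false, Y) moves every q in Y to v0, provided Y is a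
     coclique.
   Reading (true, X) from {v0} gives X, so every clique is a state of the
   forward determinization; reading (false, Y) backwards from {v0} gives Y, so
   every coclique is a state of the backward determinization.
   Unambiguity rests on two facts: two distinct states that both accept the
   same suffix are non-adjacent (the next letter is either a clique letter,
   which forces both to be v0, or a coclique letter, whose set contains both),
   while one letter read from one state leads to equal or adjacent states.
   Hence two accepting runs on the same word stay equal, by induction on the
   word.
   When the graph has no vertex, the empty automaton does the job. *)

Section CliqueFacts.
Variables (T : finType) (e : rel T).

Lemma clique_adj (X : {set T}) x y :
  is_clique e X -> x \in X -> y \in X -> x != y -> e x y.
Proof.
move=> /forall_inP/(_ x) cX xX yX; move: (cX xX) => /forall_inP/(_ y).
by move=> /(_ yX)/implyP.
Qed.

Lemma coclique_nadj (Y : {set T}) x y :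
  is_coclique e Y -> x \in Y -> y \in Y -> x != y -> ~~ e x y.
Proof.
move=> /forall_inP/(_ x) cY xY yY; move: (cY xY) => /forall_inP/(_ y).
by move=> /(_ yY)/implyP.
Qed.

End CliqueFacts.

Section Construction.
Variables (T : finType) (e : rel T) (v0 : T).

(* Letters: a colour (true = clique letter, false = coclique letter) and a set. *)
Definition letter : finType := (bool * {set T})%type.

Definition graph_trans (q : T) (a : letter) (p : T) : bool :=
  if a.1 then [&& q == v0, is_clique e a.2 & p \in a.2]
  else [&& is_coclique e a.2, q \in a.2 & p == v0].

Definition graph_nfa : nfa T letter := Nfa graph_trans [set v0] [set v0].

Definition accepts_from (q : T) (w : seq letter) (r : seq T) : bool :=
  run_from graph_nfa q w r && (last q r \in final graph_nfa).

(* States that may occupy the same position of two accepting runs. *)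
Definition compatible (q q' : T) : bool := (q == q') || e q q'.

Lemma accepts_distinct_nadj w q q' r r' :
  accepts_from q w r -> accepts_from q' w r' -> q != q' -> ~~ e q q'.
Proof.
rewrite /accepts_from; case: w => [|[[] X] w] /=.
- case: r => [|? ?]; case: r' => [|? ?] //=.
  by rewrite !inE => /eqP -> /eqP ->; rewrite eqxx.
- case: r => // p r; case: r' => // p' r'.
  rewrite /graph_trans /= => /andP[/andP[/and3P[/eqP -> _ _] _] _].
  by move=> /andP[/andP[/and3P[/eqP -> _ _] _] _]; rewrite eqxx.
- case: r => // p r; case: r' => // p' r'.
  rewrite /graph_trans /= => /andP[/andP[/and3P[cY qY _] _] _].
  move=> /andP[/andP[/and3P[_ qY' _] _] _].
  exact: coclique_nadj cY qY qY'.
Qed.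

Lemma trans_compatible q a p p' :
  graph_trans q a p -> graph_trans q a p' -> compatible p p'.
Proof.
rewrite /graph_trans /compatible; case: a => [[] X] /=.
- move=> /and3P[_ cX pX] /and3P[_ _ pX'].
  by case: eqVneq => //= /(clique_adj cX pX pX').
- by move=> /and3P[_ _ /eqP ->] /and3P[_ _ /eqP ->]; rewrite eqxx.
Qed.

Lemma accepts_compatible_same w q q' r r' :
  compatible q q' -> accepts_from q w r -> accepts_from q' w r' -> q = q'.
Proof.
case/orP => [/eqP // | adj] acc acc'.
by apply: contraTeq adj; apply: accepts_distinct_nadj acc acc'.
Qed.

Lemma accepts_compatible_eq w q q' r r' :
  compatible q q' -> accepts_from q w r -> accepts_from q' w r' ->
  q :: r = q' :: r'.
Proof.
elim: w q q' r r' => [|a w IH] q q' r r' cqq acc acc';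
  have qq' := accepts_compatible_same cqq acc acc'; subst q'.
  by move: acc acc'; rewrite /accepts_from; case: r; case: r'.
move: acc acc'; rewrite /accepts_from; case: r => // p r; case: r' => // p' r'.
move=> /= /andP[/andP[tp run] fin] /andP[/andP[tp' run'] fin'].
have acc : accepts_from p w r by rewrite /accepts_from run fin.
have acc' : accepts_from p' w r' by rewrite /accepts_from run' fin'.
by rewrite (IH _ _ _ _ (trans_compatible tp tp') acc acc').
Qed.

(* The construction is unambiguous: both runs start in v0, which is compatible
   with itself. *)
Lemma graph_nfa_unambiguous : unambiguous graph_nfa.
Proof.
move=> w q0 r q0' r' /and3P[i run fin] /and3P[i' run' fin'].
apply: (@accepts_compatible_eq w); last 2 first.
- by rewrite /accepts_from run fin.
- by rewrite /accepts_from run' fin'.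
by move: i i'; rewrite !inE => /eqP -> /eqP ->; rewrite /compatible eqxx.
Qed.

Lemma delta_clique_letter (X : {set T}) :
  is_clique e X -> delta graph_nfa (init graph_nfa) [:: (true, X)] = X.
Proof.
move=> cX; apply/setP => p; rewrite inE; apply/existsP/idP.
- by case=> q /andP[_ /existsP[q' /andP[/and3P[_ _ q'X] /eqP <-]]].
- move=> pX; exists v0; rewrite inE eqxx /=; apply/existsP; exists p.
  by rewrite /graph_trans /= !eqxx cX pX.
Qed.

Lemma delta_inv_coclique_letter (Y : {set T}) :
  is_coclique e Y -> delta_inv graph_nfa [:: (false, Y)] (final graph_nfa) = Y.
Proof.
move=> cY; apply/setP => p; rewrite inE; apply/existsP/idP.
- by case=> q /andP[_ /existsP[q' /andP[/and3P[_ pY _] _]]].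
- move=> pY; exists v0; rewrite inE eqxx /=; apply/existsP; exists v0.
  by rewrite /graph_trans /= cY pY !eqxx.
Qed.

Lemma cliques_fwd_det_states : cliques e \subset fwd_det_states graph_nfa.
Proof.
apply/subsetP => X; rewrite !inE => cX; apply/asboolP.
by exists [:: (true, X)]; rewrite delta_clique_letter.
Qed.

Lemma cocliques_bwd_det_states : cocliques e \subset bwd_det_states graph_nfa.
Proof.
apply/subsetP => Y; rewrite !inE => cY; apply/asboolP.
by exists [:: (false, Y)]; rewrite delta_inv_coclique_letter.
Qed.

End Construction.

Section EmptyStateSet.
Variables (Q Sigma : finType).

Definition empty_nfa : nfa Q Sigma := Nfa (fun _ _ _ => false) set0 set0.

(* It has no accepting run at all, so it is trivially unambiguous. *)
Lemma empty_nfa_unambiguous : unambiguous empty_nfa.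
Proof. by move=> w q0 r q0' r' /and3P[]; rewrite inE. Qed.

Hypothesis Q_empty : #|Q| = 0.

(* Over an empty state set, the only set of states is the empty one, which is
   reached by the empty word in either direction. *)
Lemma set_of_empty_state_set (S S' : {set Q}) : S = S'.
Proof. by apply/setP => x; have := card0_eq Q_empty x; rewrite inE. Qed.

Lemma fwd_det_states_empty (A : nfa Q Sigma) : fwd_det_states A = setT.
Proof.
apply/setP => S; rewrite !inE; apply/asboolP.
by exists [::]; apply: set_of_empty_state_set.
Qed.

Lemma bwd_det_states_empty (A : nfa Q Sigma) : bwd_det_states A = setT.
Proof.
apply/setP => S; rewrite !inE; apply/asboolP.
by exists [::]; apply: set_of_empty_state_set.
Qed.

End EmptyStateSet.

Theorem lemma3 (T : finType) (e : rel T) (k l : nat) :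
  simple_graph e ->
  #|cliques e| = k -> #|cocliques e| = l ->
  exists (Q Sigma : finType) (A : nfa Q Sigma),
    [/\ unambiguous A, #|Q| = #|T|,
        k <= #|fwd_det_states A| & l <= #|bwd_det_states A|].
Proof.
move=> _ <- <-.
have [T_empty | /card_gt0P[v0 _]] := posnP #|T|.
  exists T, unit, (empty_nfa T unit).
  rewrite fwd_det_states_empty // bwd_det_states_empty //.
  by split; [exact: empty_nfa_unambiguous | | exact: subset_leq_card ..].
exists T, (letter T), (graph_nfa e v0); split => //.
- exact: graph_nfa_unambiguous.
- exact/subset_leq_card/cliques_fwd_det_states.
- exact/subset_leq_card/cocliques_bwd_det_states.
Qed.
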